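(* Let $q\equiv 3\pmod 4$ be a prime power. Suppose $E_0,E_1,E_2,E_3\subseteq\mathbb{F}_{q^2}$ satisfy $|E_i|=(q^2-q)/2$ for $i=0,1,2,3$, $\{E_0,E_1,E_2,E_3\}$ is a difference family of type $H$ in $(\mathbb{F}_{q^2},+)$, and in $\mathbb{Z}[(\mathbb{F}_{q^2},+)]$ $$E_0E_1^{(-1)}+E_1E_0^{(-1)}+E_2E_3^{(-1)}+E_3E_2^{(-1)}=(q-1)^2\,\mathbb{F}_{q^2}+2D_0-2D_2.$$ In $G=\mathbb{Z}_2\times(\mathbb{F}_{q^2},+)$ put $B_0=(\{0\}\times D_0)\cup(\{1\}\times(\mathbb{F}_{q^2}\setminus D_0))$, $B_1=(\{0\}\times D_2)\cup(\{1\}\times D_2)$, $B_2=(\{0\}\times E_0)\cup(\{1\}\times(\mathbb{F}_{q^2}\setminus E_1))$, $B_3=(\{0\}\times E_2)\cup(\{1\}\times(\mathbb{F}_{q^2}\setminus E_3))$. Then $\{B_0,B_1,B_2,B_3\}$ is a difference family with parameters $(2q^2;q^2,q^2-1,q^2,q^2;2q^2-2)$ in $G$.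
   Context: Let $\omega$ be a primitive element of $\mathbb{F}_{q^2}$, $C_i^{(N,q^2)}=\omega^i\langle\omega^N\rangle$ for $N\mid q^2-1$, and $D_i=C_i^{(4,q^2)}\cup C_{i+1}^{(4,q^2)}$. Subsets $X$ of an abelian group $G$ are identified with $\sum_{x\in X}x\in\mathbb{Z}[G]$, and $X^{(-1)}=\{-x:x\in X\}$. A collection $\{B_1,\dots,B_\ell\}$ of subsets of $G$ with $|B_i|=k_i$ is a difference family with parameters $(|G|;k_1,\dots,k_\ell;\lambda)$ if every nonzero element of $G$ occurs exactly $\lambda$ times among the differences $x-y$, $x,y\in B_i$, $x\ne y$, $i=1,\dots,\ell$; equivalently $\sum_i B_iB_i^{(-1)}=\lambda G+(\sum_i k_i-\lambda)\cdot 0_G$. A difference family with four blocks is of type $H$ if $\sum_{i=1}^4k_i-|G|=\lambda$. *)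

From HB Require Import structures.
From mathcomp Require Import all_boot all_order all_algebra all_field.
Set Implicit Arguments. Unset Strict Implicit. Unset Printing Implicit Defensive.
Import GRing.Theory.
Local Open Scope ring_scope.

(* Subsets of a finite abelian group V are {set V}.  The group-ring product
   X Y^(-1) has coefficient at g equal to the number of pairs (x,y) in X*Y
   with x - y = g. *)
Definition ndiff (V : finZmodType) (X Y : {set V}) (g : V) : nat :=
  #|[set p : V * V | [&& p.1 \in X, p.2 \in Y & p.1 - p.2 == g]]|.

Definition ndiff_distinct (V : finZmodType) (B : {set V}) (g : V) : nat :=
  #|[set p : V * V | [&& p.1 \in B, p.2 \in B, p.1 != p.2 & p.1 - p.2 == g]]|.

Definition diff_family_params (V : finZmodType) (Bs : seq {set V})
  (v : nat) (ks : seq nat) (lam : nat) : Prop :=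
  [/\ #|V| = v, map (fun B : {set V} => #|B|) Bs = ks &
      forall g : V, g != 0 -> (\sum_(B <- Bs) ndiff_distinct B g)%N = lam].

Definition diff_family_type_H (V : finZmodType) (Bs : seq {set V}) : Prop :=
  size Bs = 4%N /\
  exists lam : nat,
    diff_family_params Bs #|V| (map (fun B : {set V} => #|B|) Bs) lam /\
    (\sum_(B <- Bs) #|B|)%N = (#|V| + lam)%N.

Definition cyc4 (F : finFieldType) (w : F) (i : nat) : {set F} :=
  [set x : F | [exists j : 'I_#|F|, x == w ^+ (i + 4 * j)]].

Definition Dcl (F : finFieldType) (w : F) (i : nat) : {set F} :=
  cyc4 w i :|: cyc4 w i.+1.

Definition Z2F (F : finFieldType) : Type := ('Z_2 * F)%type.
HB.instance Definition _ (F : finFieldType) := GRing.Zmodule.on (Z2F F).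
HB.instance Definition _ (F : finFieldType) := Finite.on (Z2F F).

From HB Require Import structures.
From mathcomp Require Import all_boot all_order all_algebra all_field.
From mathcomp Require Import ring zify.
Import GRing.Theory.
Local Open Scope ring_scope.
Set Implicit Arguments. Unset Strict Implicit. Unset Printing Implicit Defensive.

(* Write nshift X Y h for the number of z in X with z + h in Y, the coefficient of h
   in Y X^(-1).  The block {0} x X u {1} x Y has nshift X X h + nshift Y Y h
   differences equal to (0, h) and nshift X Y h + nshift Y X h equal to (1, h), and
   complementing a set changes these counts in a controlled way.  Hence, given the
   hypotheses on E_0, ..., E_3 (type H and the cross identity), the theorem reduces
   to two facts about D0 = C_0 u C_1 and D2 = C_2 u C_3:
     nshift D0 D0 h + [h in D0] = nshift D2 D2 h + [h in D2]              (all h),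
     2 (nshift D0 D0 h + nshift D2 D2 h) + 3 = q^2                        (h <> 0).
   These follow from an exact count for the phase map x |-> x^(q-1), which sends F^*
   onto the circle of (q+1)-th roots of unity.  Since 4 | q + 1, each of D0 and D2 is
   a union of phase fibres meeting (q+1)/2 of them.  For such a union S and h <> 0 the
   substitution z = h (u - 1) splits nshift S S h into Frobenius-fixed u (the subfield
   F_q, contributing q - 2 when h is in S) and non-fixed u, which correspond exactly to
   ordered pairs of distinct circle points (phase u, phase (u - 1)) different from 1. *)

Lemma card_offdiag (T : finType) (X : {set T}) :
  #|[set p : T * T | [&& p.1 \in X, p.2 \in X & p.1 != p.2]]| = (#|X| * #|X|.-1)%N.
Proof.
have := cardsID [set p : T * T | p.1 == p.2] (setX X X).
have -> : setX X X :&: [set p : T * T | p.1 == p.2] = (fun x => (x, x)) @: X.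
  apply/setP => -[a b]; rewrite !inE /=; apply/idP/imsetP.
    by move=> /andP[/andP[aX _] /eqP <-]; exists a.
  by move=> [x xX [-> ->]]; rewrite xX eqxx.
have -> : setX X X :\: [set p : T * T | p.1 == p.2] =
    [set p : T * T | [&& p.1 \in X, p.2 \in X & p.1 != p.2]].
  by apply/setP => -[a b]; rewrite !inE /= andbC andbA.
rewrite cardsX card_imset; last by move=> x y [].
by case: #|X| => [|k] /=; lia.
Qed.

Section ShiftCounts.
Variable V : finZmodType.
Implicit Types (X Y : {set V}) (h : V).

Definition nshift X Y h := #|[set z in X | z + h \in Y]|.

Lemma ndiff_nshift X Y h : ndiff X Y h = nshift Y X h.
Proof.
have pair_inj : injective (fun y : V => (y + h, y)) by move=> y z [_ ->].
rewrite /ndiff /nshift -(card_imset _ pair_inj).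
apply: eq_card => -[a b]; rewrite !inE /=; apply/and3P/imsetP.
  move=> [aX bY /eqP <-]; exists b; last by rewrite addrC subrK.
  by rewrite inE bY addrC subrK.
move=> [y]; rewrite inE => /andP[yY yhX] [-> ->].
by rewrite yY yhX addrAC subrr add0r.
Qed.

(* For h <> 0 the condition x <> y in ndiff_distinct is automatic. *)
Lemma ndiff_distinct_nshift B h : h != 0 -> ndiff_distinct B h = nshift B B h.
Proof.
move=> h0; rewrite -ndiff_nshift; apply: eq_card => -[a b]; rewrite !inE /=.
by case: (eqVneq a b) => [->|//]; rewrite subrr eq_sym (negbTE h0) !andbF.
Qed.

Lemma nshiftXX0 X : nshift X X 0 = #|X|.
Proof. by apply: eq_card => z; rewrite !inE addr0 andbb. Qed.

Lemma nshiftCr X Y h : (nshift X (~: Y) h + nshift X Y h)%N = #|X|.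
Proof.
rewrite /nshift -[RHS](cardsID [set z | z + h \in Y] X) addnC.
by congr (_ + _)%N; apply: eq_card => z; rewrite !inE // andbC.
Qed.

Lemma nshiftCl X Y h : (nshift (~: X) Y h + nshift X Y h)%N = #|Y|.
Proof.
have cardY : #|[set z | z + h \in Y]| = #|Y|.
  by rewrite -(card_preimset _ (addIr h)); apply: eq_card => z; rewrite !inE.
rewrite /nshift -cardY -[RHS](cardsID X) addnC.
by congr (_ + _)%N; apply: eq_card => z; rewrite !inE andbC.
Qed.

Lemma nshiftCC (X : {set V}) h :
  (nshift (~: X) (~: X) h + 2 * #|X| = #|V| + nshift X X h)%N.
Proof.
rewrite -(cardsC X); have := nshiftCr (~: X) X h; have := nshiftCl X X h.
by lia.
Qed.

Lemma nshiftC_cross (X Y : {set V}) h :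
  (nshift X (~: Y) h + nshift (~: Y) X h + nshift X Y h + nshift Y X h = 2 * #|X|)%N.
Proof. by have := nshiftCr X Y h; have := nshiftCl Y X h; lia. Qed.

Lemma typeH_nshift (E0 E1 E2 E3 : {set V}) h :
  diff_family_type_H [:: E0; E1; E2; E3] -> h != 0 ->
  (nshift E0 E0 h + nshift E1 E1 h + nshift E2 E2 h + nshift E3 E3 h + #|V|
    = #|E0| + #|E1| + #|E2| + #|E3|)%N.
Proof.
move=> [_ [lam [[_ _ lamP] sizeH]]] h0; move: (lamP h h0) sizeH.
by rewrite !big_cons !big_nil !ndiff_distinct_nshift //; lia.
Qed.

End ShiftCounts.

Section Z2Blocks.
Variable F : finFieldType.
Implicit Types (X Y : {set F}) (h : F).

Definition block X Y : {set Z2F F} :=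
  [set x | if x.1 == 0 then x.2 \in X else x.2 \in Y].

Lemma Z2_cases (c : 'Z_2) : c = 0 \/ c = 1.
Proof. by case: c => [[|[|//]]] i; [left|right]; apply: val_inj. Qed.

Lemma Z2_01 : ((0 : 'Z_2) == 1) = false. Proof. by []. Qed.
Lemma Z2_10 : ((1 : 'Z_2) == 0) = false. Proof. by []. Qed.
Lemma Z2_11 : (1 + 1 : 'Z_2) = 0. Proof. exact: val_inj. Qed.
Definition Z2E := (Z2_01, Z2_10, Z2_11).

Lemma card_Z2F : #|{: Z2F F}| = (2 * #|F|)%N.
Proof. by rewrite card_prod card_ord. Qed.

Lemma card_block X Y : #|block X Y| = (#|X| + #|Y|)%N.
Proof.
have -> : block X Y = setX [set 0] X :|: setX [set 1] Y.
  by apply/setP => -[c z]; rewrite !inE /=; case: (Z2_cases c) => ->; rewrite ?Z2E ?eqxx ?orbF.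
rewrite cardsU !cardsX !cards1 !mul1n -[RHS]subn0; congr (_ - _)%N.
apply/eqP; rewrite cards_eq0; apply/eqP/setP => -[c z]; rewrite !inE /=.
by case: (Z2_cases c) => ->; rewrite ?Z2E ?eqxx ?andbF.
Qed.

Lemma block_diff0 X Y h : h != 0 ->
  ndiff_distinct (block X Y) (0, h) = (nshift X X h + nshift Y Y h)%N.
Proof.
move=> h0; rewrite ndiff_distinct_nshift; last by apply: contra h0 => /eqP[->].
rewrite -card_block; apply: eq_card => -[c z]; rewrite !inE /=.
by case: (Z2_cases c) => ->; rewrite ?Z2E ?eqxx ?addr0.
Qed.

Lemma block_diff1 X Y h :
  ndiff_distinct (block X Y) (1, h) = (nshift X Y h + nshift Y X h)%N.
Proof.
rewrite ndiff_distinct_nshift // -card_block; apply: eq_card => -[c z].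
by rewrite !inE /=; case: (Z2_cases c) => ->; rewrite ?Z2E ?eqxx ?add0r /=.
Qed.

End Z2Blocks.

(* Substituting z = h (u - 1): count the u with h (u - 1) and h u both in S. *)
Lemma nshift_rescale (F : finFieldType) (S : {set F}) (h : F) : h != 0 ->
  nshift S S h = #|[set u | (h * (u - 1) \in S) && (h * u \in S)]|.
Proof.
move=> h0; have inj : injective (fun u => h * (u - 1)).
  by move=> u v /(mulfI h0) /addIr.
rewrite -(card_imset _ inj); apply: eq_card => z; rewrite !inE.
apply/andP/imsetP => [[zS zhS]|[u]].
  exists (z / h + 1); last by rewrite addrK mulrC divfK.
  by rewrite inE addrK mulrC divfK // zS mulrDr mulr1 mulrC divfK.
by rewrite inE => /andP[uS uhS] ->; rewrite uS mulrBr mulr1 subrK.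
Qed.

(* The phase map x |-> x^(q-1) of a field F in which x |-> x^q is an additive
   involution with exactly q fixed points (F = F_{q^2}).  It maps F^* into the circle
   {s | s^(q+1) = 1}, and x^q = phase x * x plays the role of complex conjugation. *)
Section Phase.
Variables (F : finFieldType) (q : nat).
Hypothesis q_gt1 : (1 < q)%N.
Hypothesis frobD : forall x y : F, (x + y) ^+ q = x ^+ q + y ^+ q.
Hypothesis frobK : forall x : F, x ^+ (q * q) = x.
Hypothesis card_frob_fixed : #|[set u : F | u ^+ q == u]| = q.
Implicit Types (x y u s t h : F) (S : {set F}).

Definition phase x := x ^+ q.-1.

Lemma frob0 : (0 : F) ^+ q = 0.
Proof. by rewrite expr0n; case: q q_gt1. Qed.

Lemma frobB x y : (x - y) ^+ q = x ^+ q - y ^+ q.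
Proof. by apply: (addIr (y ^+ q)); rewrite -frobD !subrK. Qed.

Lemma phaseM x y : phase (x * y) = phase x * phase y.
Proof. exact: exprMn. Qed.

Lemma frob_phase x : x ^+ q = phase x * x.
Proof. by rewrite /phase -exprSr prednK // ltnW. Qed.

Lemma phase_fixed u : u != 0 -> u ^+ q = u -> phase u = 1.
Proof. by move=> u0 fu; apply: (mulIf u0); rewrite mul1r -frob_phase. Qed.

Lemma phase_neq0 x : x != 0 -> phase x != 0.
Proof. exact: expf_neq0. Qed.

Lemma phase_circle x : x != 0 -> phase x ^+ q.+1 = 1.
Proof.
move=> x0; apply: (mulIf x0); rewrite mul1r /phase -exprM -exprSr -[RHS]frobK.
by congr (_ ^+ _); case: q q_gt1 => // n _; rewrite /= mulSn mulnS; ring.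
Qed.

Lemma circle_neq0 s : s ^+ q.+1 = 1 -> s != 0.
Proof. by apply: contra_eqN => /eqP->; rewrite expr0n eq_sym oner_eq0. Qed.

Lemma circle_frob s : s ^+ q.+1 = 1 -> s ^+ q = s^-1.
Proof.
by move=> hs; apply: (mulIf (circle_neq0 hs)); rewrite mulVf ?circle_neq0 // -exprSr.
Qed.

Lemma nonfixed_neq0 u : u ^+ q != u -> u != 0 /\ u - 1 != 0.
Proof.
move=> nfu; split; apply: contraNneq nfu; first by move->; rewrite frob0.
by move/eqP; rewrite subr_eq0 => /eqP->; rewrite expr1n.
Qed.

Lemma nonfixed_phase u : u ^+ q != u ->
  [/\ phase u != 1, phase (u - 1) != 1, phase u != phase (u - 1)
    & u = (1 - phase (u - 1)) / (phase u - phase (u - 1))].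
Proof.
move=> nfu; have E1 := frob_phase u.
have E2 : u ^+ q - 1 = phase (u - 1) * (u - 1) by rewrite -frob_phase frobB expr1n.
have s1 : phase u != 1 by apply: contraNneq nfu => h1; rewrite E1 h1 mul1r.
have t1 : phase (u - 1) != 1.
  by apply: contraNneq nfu => h1; move: E2; rewrite h1 mul1r => /addIr->.
have st : phase u != phase (u - 1).
  apply: contraNneq s1 => h1; move: E2.
  by rewrite E1 -h1 mulrBr mulr1 => /addrI /oppr_inj <-.
have stn : phase u - phase (u - 1) != 0 by rewrite subr_eq0.
split=> //; apply: (mulIf stn); rewrite divfK //; move: E2; rewrite E1 => E2.
have -> : u * (phase u - phase (u - 1)) = (phase u * u - 1) - phase (u - 1) * u + 1.
  by ring.
by rewrite E2; ring.
Qed.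

Lemma phases_realized s t : s ^+ q.+1 = 1 -> t ^+ q.+1 = 1 ->
  s != 1 -> t != 1 -> s != t ->
  exists2 u, u ^+ q != u & phase u = s /\ phase (u - 1) = t.
Proof.
move=> hs ht s1 t1 st; pose u := (1 - t) / (s - t).
have [s0 t0] := (circle_neq0 hs, circle_neq0 ht).
have stn : s - t != 0 by rewrite subr_eq0.
have u0 : u != 0 by rewrite mulf_neq0 ?invr_eq0 // subr_eq0 eq_sym.
have u1E : u - 1 = (1 - s) / (s - t) by rewrite /u; field.
have u10 : u - 1 != 0 by rewrite u1E mulf_neq0 ?invr_eq0 // subr_eq0 eq_sym.
have Eu : u ^+ q = s * u.
  rewrite /u exprMn exprVn !frobB expr1n (circle_frob hs) (circle_frob ht).
  by field; rewrite stn s0 t0 /= mulN1r subr_eq0 eq_sym.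
have phu : phase u = s by apply: (mulIf u0); rewrite -frob_phase.
exists u; first by rewrite Eu -{2}[u]mul1r (inj_eq (mulIf u0)).
split=> //; apply: (mulIf u10); rewrite -frob_phase frobB expr1n Eu u1E /u.
by field.
Qed.

Definition phase_stable S :=
  0 \notin S /\ forall x y, x != 0 -> y != 0 -> phase x = phase y -> (x \in S) = (y \in S).

Section Stable.
Variable S : {set F}.
Hypothesis stS : phase_stable S.

Lemma phase_stableE x : (x \in S) = (x != 0) && (phase x \in phase @: S).
Proof.
have [S0 fib] := stS; case: (eqVneq x 0) => [->|x0]; first exact: negbTE.
apply/idP/imsetP => [xS|[y yS /fib->//]]; first by exists x.
by apply: contraNneq S0 => <-.
Qed.

Lemma phase_image_circle a : a \in phase @: S -> a ^+ q.+1 = 1.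
Proof.
move=> /imsetP[x xS ->]; apply: phase_circle.
by apply: contraTneq xS => ->; case: stS.
Qed.

(* Fixed u: u and u - 1 have phase 1, so only h matters; u = 0, 1 are excluded. *)
Lemma count_fixed h : h != 0 ->
  #|[set u | (u ^+ q == u) && ((h * (u - 1) \in S) && (h * u \in S))]| =
    ((h \in S) * (q - 2))%N.
Proof.
move=> h0; have [S0 _] := stS.
have scaleS u : u != 0 -> u ^+ q = u -> (h * u \in S) = (h \in S).
  by move=> u0 fu; rewrite !phase_stableE phaseM (phase_fixed u0 fu) mulr1 (mulf_neq0 h0 u0) h0.
set Fix := [set u : F | u ^+ q == u].
have [Fix0 Fix1] : 0 \in Fix /\ 1 \in Fix by rewrite !inE frob0 expr1n.
have -> : [set u | (u ^+ q == u) && ((h * (u - 1) \in S) && (h * u \in S))] =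
    [set u in Fix :\ 0 :\ 1 | h \in S].
  apply/setP => u; rewrite !inE; case fu: (u ^+ q == u); rewrite ?andbF //=.
  move/eqP: fu => fu; have fu1 : (u - 1) ^+ q = u - 1 by rewrite frobB fu expr1n.
  case: (eqVneq u 0) => [->|u0]; first by rewrite mulr0 (negbTE S0) !andbF.
  case: (eqVneq u 1) => [->|u1]; first by rewrite subrr mulr0 (negbTE S0).
  by rewrite (scaleS _ u0 fu) (scaleS (u - 1)) ?subr_eq0 // andbb.
case: (h \in S); last by apply/eqP; rewrite cards_eq0; apply/eqP/setP => u; rewrite !inE andbF.
rewrite mul1n -(@eq_card _ (Fix :\ 0 :\ 1)); last by move=> u; rewrite !inE andbT.
have := cardsD1 1 (Fix :\ 0); have := cardsD1 0 Fix.
by rewrite card_frob_fixed Fix0 in_setD1 oner_neq0 Fix1 /= => -> ->; rewrite !add1n subn2.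
Qed.

(* Non-fixed u correspond, via their phases scaled by phase h, to ordered pairs of
   distinct points of phase(S) other than phase h. *)
Lemma count_moving h : h != 0 ->
  #|[set u | (u ^+ q != u) && ((h * (u - 1) \in S) && (h * u \in S))]| =
    (#|phase @: S :\ phase h| * #|phase @: S :\ phase h|.-1)%N.
Proof.
move=> h0; have ph0 := phase_neq0 h0.
have ne_ph x : (phase h * x != phase h) = (x != 1).
  by rewrite -{2}[phase h]mulr1 (inj_eq (mulfI ph0)).
pose f u := (phase h * phase u, phase h * phase (u - 1)).
rewrite -card_offdiag -(@card_in_imset _ _ f); last first.
  move=> u v; rewrite !inE => /andP[nfu _] /andP[nfv _] [/(mulfI ph0) e1 /(mulfI ph0) e2].
  by have [_ _ _ ->] := nonfixed_phase nfu; have [_ _ _ ->] := nonfixed_phase nfv; rewrite e1 e2.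
apply: eq_card => -[a b]; rewrite [in RHS]inE /=; apply/imsetP/idP.
  move=> [u]; rewrite !inE => /andP[nfu /andP[Su1 Su]] [-> ->].
  have [u0 u10] := nonfixed_neq0 nfu; have [s1 t1 st _] := nonfixed_phase nfu.
  move: Su1 Su; rewrite !phase_stableE !phaseM => /andP[_ ->] /andP[_ ->].
  by rewrite !ne_ph s1 t1 (inj_eq (mulfI ph0)) st.
rewrite !in_setD1 => /and3P[/andP[ah aT] /andP[bh bT] ab].
have circ c : c \in phase @: S -> (c / phase h) ^+ q.+1 = 1.
  by move=> cT; rewrite exprMn exprVn phase_image_circle // phase_circle // invr1 mulr1.
have ne_div c : (c / phase h != 1) = (c != phase h).
  by rewrite -[1](divff ph0) (inj_eq (mulIf _)) ?invr_eq0.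
have s1 : a / phase h != 1 by rewrite ne_div.
have t1 : b / phase h != 1 by rewrite ne_div.
have st : a / phase h != b / phase h by rewrite (inj_eq (mulIf _)) ?invr_eq0.
have [u nfu [phu phu1]] := phases_realized (circ _ aT) (circ _ bT) s1 t1 st.
have [u0 u10] := nonfixed_neq0 nfu.
have unscale c : phase h * (c / phase h) = c by rewrite mulrC divfK.
exists u; last by rewrite /f phu phu1 !unscale.
by rewrite !inE nfu !phase_stableE !mulf_neq0 //= !phaseM phu phu1 !unscale aT bT.
Qed.

Lemma phase_stable_count h : h != 0 ->
  nshift S S h = ((h \in S) * (q - 2) +
    (#|phase @: S| - (h \in S)) * (#|phase @: S| - (h \in S)).-1)%N.
Proof.
move=> h0; have memh : (phase h \in phase @: S) = (h \in S) by rewrite phase_stableE h0.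
rewrite (cardsD1 (phase h) (phase @: S)) memh addKn -count_fixed // -count_moving //.
rewrite nshift_rescale // -[LHS](cardsID [set u | u ^+ q == u]).
by congr (_ + _)%N; apply: eq_card => u; rewrite !inE // andbC.
Qed.

End Stable.
End Phase.

Lemma frob_additive (F : finFieldType) (q : nat) :
  (exists p k : nat, [/\ prime p, (0 < k)%N & q = (p ^ k)%N]) -> #|F| = (q ^ 2)%N ->
  forall x y : F, (x + y) ^+ q = x ^+ q + y ^+ q.
Proof.
move=> [p [k [p_pr k_gt0 ->]]] cardF x y.
have p_char : p \in [pchar F].
  by apply: (@card_finPcharP _ _ (k * 2)%N) => //; rewrite cardF -expnM.
by apply: exprDn_pchar; rewrite pnatX (pnatE _ p_pr) p_char.
Qed.

Lemma card_unity (F : finFieldType) (d : nat) (z : F) :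
  (0 < d)%N -> d.-primitive_root z -> #|[set x : F | x ^+ d == 1]| = d.
Proof.
move=> d_gt0 zP.
have -> : [set x : F | x ^+ d == 1] = (fun i : 'I_d => z ^+ i) @: [set: 'I_d].
  apply/setP => x; rewrite inE; apply/eqP/imsetP.
    by move=> /(prim_rootP zP) [i ->]; exists i.
  by move=> [i _ ->]; rewrite -exprM mulnC exprM (prim_expr_order zP) expr1n.
rewrite card_imset ?cardsT ?card_ord // => i j /eqP.
by rewrite (eq_prim_root_expr zP) !modn_small // => /eqP /val_inj.
Qed.

Section Cyclotomic.
Variables (F : finFieldType) (q r : nat) (w : F).
Hypothesis q_eq : q = (4 * r + 3)%N.
Hypothesis cardF : #|F| = (q ^ 2)%N.
Hypothesis wP : (#|F|.-1).-primitive_root w.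
Hypothesis frobD : forall x y : F, (x + y) ^+ q = x ^+ q + y ^+ q.
Implicit Types (x y : F) (e : nat).

Local Notation N := #|F|.-1.
Local Notation D0 := (Dcl w 0).
Local Notation D2 := (Dcl w 2).

Lemma card_units : N = (q.-1 * q.+1)%N.
Proof. by rewrite cardF q_eq /=; nia. Qed.

Lemma cardF_units : #|F| = N.+1.
Proof. by rewrite prednK // cardF q_eq; nia. Qed.

Lemma units_gt0 : (0 < N)%N.
Proof. by rewrite card_units q_eq /=; nia. Qed.

Lemma frob_invol x : x ^+ (q * q) = x.
Proof. by rewrite mulnn -cardF expf_card. Qed.

Lemma units_order x : x != 0 -> x ^+ N = 1.
Proof.
by move=> x0; apply: (mulIf x0); rewrite mul1r -exprSr -cardF_units expf_card.
Qed.

Lemma w_neq0 : w != 0.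
Proof. by rewrite (prim_root_eq0 wP) -lt0n units_gt0. Qed.

Lemma dlog x : x != 0 -> exists e, x = w ^+ e.
Proof. by move=> x0; have [i ->] := prim_rootP wP (units_order x0); exists i. Qed.

Lemma four_dvd_units : (4 %| N)%N.
Proof. by apply/dvdnP; exists ((4 * r + 2) * (r + 1))%N; rewrite card_units q_eq /=; nia. Qed.

Lemma mem_cyc4 e a : (a < 4)%N -> (w ^+ e \in cyc4 w a) = (e %% 4 == a)%N.
Proof.
move=> a_lt4; rewrite inE; apply/existsP/eqP => [[j]|e_mod].
  rewrite (eq_prim_root_expr wP) => /eqP E.
  by rewrite -(modn_dvdm e four_dvd_units) E (modn_dvdm _ four_dvd_units); lia.
have j_lt : ((e %% N) %/ 4 < #|F|)%N.
  by rewrite cardF_units ltnS (leq_trans (leq_div _ _)) // ltnW // ltn_pmod // units_gt0.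
have E : (a + 4 * ((e %% N) %/ 4) = e %% N)%N.
  by rewrite [in RHS](divn_eq (e %% N) 4) (modn_dvdm e four_dvd_units) e_mod addnC mulnC.
by exists (Ordinal j_lt); rewrite (eq_prim_root_expr wP) /= E modn_mod.
Qed.

Lemma cyc4_neq0 a : 0 \notin cyc4 w a.
Proof.
rewrite inE; apply/existsP => -[j /eqP] /esym /eqP.
by rewrite expf_eq0 (negbTE w_neq0) andbF.
Qed.

Lemma memD0 e : (w ^+ e \in D0) = (e %% 4 < 2)%N.
Proof. by rewrite in_setU !mem_cyc4 //; have := ltn_pmod e (isT : (0 < 4)%N); lia. Qed.

Lemma memD2 e : (w ^+ e \in D2) = (2 <= e %% 4)%N.
Proof. by rewrite in_setU !mem_cyc4 //; have := ltn_pmod e (isT : (0 < 4)%N); lia. Qed.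

Lemma D0_neq0 : 0 \notin D0.
Proof. by rewrite in_setU negb_or !cyc4_neq0. Qed.

Lemma memD2E x : (x \in D2) = (x != 0) && (x \notin D0).
Proof.
have [->|x0] := eqVneq x 0; first by apply/negbTE; rewrite in_setU negb_or !cyc4_neq0.
by have [e ->] := dlog x0; rewrite memD2 memD0 /=; lia.
Qed.

Lemma D2_scaleD0 : D2 = (fun x => w ^+ 2 * x) @: D0.
Proof.
have w2_0 : w ^+ 2 != 0 by rewrite expf_neq0 // w_neq0.
have memw2 x : (w ^+ 2 * x \in D2) = (x \in D0).
  have [->|x0] := eqVneq x 0; first by rewrite mulr0 memD2E eqxx (negbTE D0_neq0).
  by have [e ->] := dlog x0; rewrite -exprD memD2 memD0; lia.
apply/setP => x; apply/idP/imsetP => [xD2|[y yD0 ->]]; last by rewrite memw2.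
by exists ((w ^+ 2)^-1 * x); rewrite ?mulVKf // -memw2 mulVKf.
Qed.

Lemma card_D2 : #|D2| = #|D0|.
Proof. by rewrite D2_scaleD0 card_imset //; apply/mulfI; rewrite expf_neq0 // w_neq0. Qed.

Lemma D0_D2_units : D0 :|: D2 = [set: F] :\ 0.
Proof.
apply/setP => x; rewrite in_setU memD2E in_setD1 in_setT andbT.
by case: (eqVneq x 0) => [->|x0]; rewrite ?(negbTE D0_neq0) //=; case: (x \in D0).
Qed.

Lemma card_D0 : (2 * #|D0|).+1 = #|F|.
Proof.
have := cardsUI D0 D2; rewrite D0_D2_units card_D2.
have -> : D0 :&: D2 = set0.
  by apply/setP => x; rewrite in_setI in_set0 memD2E; case: (x \in D0); rewrite ?andbF.
rewrite cards0 addn0 => E; rewrite -cardsT (cardsD1 0 [set: F]) in_setT E; lia.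
Qed.

Lemma prim_root_fixed : q.-1.-primitive_root (w ^+ q.+1).
Proof.
have := @dvdn_prim_root _ _ _ wP q.-1; rewrite card_units mulKn; last by rewrite q_eq addn3.
by apply; apply: dvdn_mulr.
Qed.

Lemma prim_root_circle : q.+1.-primitive_root (w ^+ q.-1).
Proof.
have := @dvdn_prim_root _ _ _ wP q.+1; rewrite card_units mulnK //.
by apply; apply: dvdn_mull.
Qed.

Local Notation phase := (phase q).

Lemma q_gt2 : (2 < q)%N.
Proof. by rewrite q_eq addn3. Qed.

Lemma card_frob_fixed : #|[set u : F | u ^+ q == u]| = q.
Proof.
have q_gt0 : (0 < q.-1)%N by rewrite q_eq addn3.
have -> : [set u : F | u ^+ q == u] = 0 |: [set x : F | x ^+ q.-1 == 1].
  apply/setP => u; rewrite !inE; have [->|u0] := eqVneq u 0.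
    by rewrite (frob0 _ (ltnW q_gt2)) !eqxx.
  by rewrite -{1}(prednK (ltnW (ltnW q_gt2))) exprSr -[X in _ == X]mul1r (inj_eq (mulIf u0)).
rewrite cardsU1 (card_unity q_gt0 prim_root_fixed) inE expr0n gtn_eqF //= mulr0n.
by rewrite eq_sym oner_eq0 add1n prednK // ltnW // ltnW // q_gt2.
Qed.

(* Equal phases differ by a power of w^(q+1), and 4 | q + 1 preserves classes mod 4. *)
Lemma D0_stable : phase_stable q D0.
Proof.
split=> [|x y x0 y0 exy]; first exact: D0_neq0.
have : (x / y) ^+ q.-1 = 1 by rewrite exprMn exprVn -/(phase x) exy divff ?expf_neq0.
move=> /(prim_rootP prim_root_fixed) [[i _] /= xy].
have [k yk] := dlog y0; rewrite yk.
have -> : x = w ^+ (q.+1 * i + k) by rewrite exprD exprM -xy -yk divfK.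
have -> : (q.+1 * i = (r + 1) * i * 4)%N by rewrite q_eq; nia.
by rewrite !memD0 modnMDl.
Qed.

Lemma D2_stable : phase_stable q D2.
Proof.
have [_ fib] := D0_stable; split=> [|x y x0 y0 exy]; first by rewrite memD2E eqxx.
by rewrite !memD2E x0 y0 (fib x y).
Qed.

Lemma phase_units : phase @: ([set: F] :\ 0) = [set s : F | s ^+ q.+1 == 1].
Proof.
apply/setP => s; rewrite inE; apply/imsetP/eqP => [[x]|].
  by rewrite !inE andbT => x0 ->; rewrite -exprM -card_units units_order.
move=> /(prim_rootP prim_root_circle) [i ->]; exists (w ^+ i).
  by rewrite !inE andbT expf_neq0 // w_neq0.
by rewrite /phase -!exprM mulnC.
Qed.

(* D0 and D2 have disjoint phase images, exchanged by phase (w^2); each is half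
   of the circle. *)
Lemma card_phase_D : #|phase @: D0| = (2 * r + 2)%N /\ #|phase @: D2| = (2 * r + 2)%N.
Proof.
have pw_0 : phase (w ^+ 2) != 0 by rewrite expf_neq0 // expf_neq0 // w_neq0.
have c2 : #|phase @: D2| = #|phase @: D0|.
  rewrite D2_scaleD0 -imset_comp.
  rewrite (eq_imset _ (_ : phase \o _ =1 (fun s => phase (w ^+ 2) * s) \o phase)).
    by rewrite imset_comp card_imset //; apply: mulfI.
  by move=> x; rewrite /= /phase exprMn.
have disj : phase @: D0 :&: phase @: D2 = set0.
  apply/setP => s; rewrite in_setI in_set0.
  apply/negP => /andP[/imsetP[x xD0 ->] /imsetP[y yD2 exy]].
  have x0 : x != 0 by apply: contraTneq xD0 => ->; exact: D0_neq0.
  have y0 : y != 0 by apply: contraTneq yD2 => ->; rewrite memD2E eqxx.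
  have [_ fib] := D0_stable.
  by move: yD2; rewrite memD2E -(fib x y) // xD0 andbF.
have := cardsUI (phase @: D0) (phase @: D2).
rewrite -imsetU D0_D2_units phase_units (card_unity _ prim_root_circle) //.
by rewrite disj cards0 addn0 c2 q_eq => E; split; lia.
Qed.

(* The fibre count when |phase(S)| = (q + 1)/2 = 2r + 2. *)
Lemma half_circle_count (b : bool) :
  (b * (q - 2) + (2 * r + 2 - b) * (2 * r + 2 - b).-1 = 4 * (r * r) + 6 * r + 2 - b)%N.
Proof. by rewrite q_eq; case: b => /=; rewrite ?subn0 ?subn1 /=; nia. Qed.

Lemma nshift_D0 h : h != 0 -> nshift D0 D0 h = (4 * (r * r) + 6 * r + 2 - (h \in D0))%N.
Proof.
move=> h0; rewrite (phase_stable_count (ltnW q_gt2) frobD frob_invol card_frob_fixed D0_stable h0).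
by rewrite (proj1 card_phase_D) half_circle_count.
Qed.

Lemma nshift_D2 h : h != 0 -> nshift D2 D2 h = (4 * (r * r) + 6 * r + 2 - (h \in D2))%N.
Proof.
move=> h0; rewrite (phase_stable_count (ltnW q_gt2) frobD frob_invol card_frob_fixed D2_stable h0).
by rewrite (proj2 card_phase_D) half_circle_count.
Qed.

Lemma nshift_D_balance h :
  (nshift D0 D0 h + (h \in D0) = nshift D2 D2 h + (h \in D2))%N.
Proof.
have [->|h0] := eqVneq h 0.
  by rewrite !nshiftXX0 card_D2 (negbTE D0_neq0) memD2E eqxx.
rewrite nshift_D0 // nshift_D2 // memD2E h0; case: (h \in D0) => /=; lia.
Qed.

Lemma nshift_D_sum h : h != 0 ->
  (2 * (nshift D0 D0 h + nshift D2 D2 h)).+3 = #|F|.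
Proof.
move=> h0; rewrite nshift_D0 // nshift_D2 // memD2E h0 cardF q_eq.
by case: (h \in D0) => /=; nia.
Qed.

End Cyclotomic.

Lemma nat_of_int_balance (x a : nat) (b c : bool) :
  (x%:Z = a%:Z + 2 * b%:Z - 2 * c%:Z)%R -> (x + 2 * c = a + 2 * b)%N.
Proof.
move=> e; apply/eqP; rewrite -eqz_nat PoszD PoszD e; apply/eqP; clear e.
by case: b; case: c => /=; ring.
Qed.

Lemma twice_half_pronic (q : nat) : (2 * ((q ^ 2 - q) %/ 2) + q = q ^ 2)%N.
Proof.
have le_q : (q <= q ^ 2)%N by case: q => // n; rewrite leq_pmulr.
have even : ~~ odd (q ^ 2 - q) by rewrite oddB // oddX /= addbb.
by rewrite divn2 mul2n even_halfK // subnK.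
Qed.

Section Assembly.
Variables (F : finFieldType) (q : nat) (D0 D2 E0 E1 E2 E3 : {set F}).
Local Notation k := ((q ^ 2 - q) %/ 2)%N.
Hypothesis q_gt0 : (0 < q)%N.
Hypothesis cardF : #|F| = (q ^ 2)%N.
Hypothesis cardD0 : (2 * #|D0|).+1 = #|F|.
Hypothesis cardD2 : #|D2| = #|D0|.
Hypothesis D_balance :
  forall h, (nshift D0 D0 h + (h \in D0) = nshift D2 D2 h + (h \in D2))%N.
Hypothesis D_sum :
  forall h, h != 0 -> (2 * (nshift D0 D0 h + nshift D2 D2 h)).+3 = #|F|.
Hypotheses (cardE0 : #|E0| = k) (cardE1 : #|E1| = k) (cardE2 : #|E2| = k) (cardE3 : #|E3| = k).
Hypothesis E_typeH : diff_family_type_H [:: E0; E1; E2; E3].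
Hypothesis E_cross : forall g : F,
  ((ndiff E0 E1 g + ndiff E1 E0 g + ndiff E2 E3 g + ndiff E3 E2 g)%N%:Z
    = ((q - 1) ^ 2)%N%:Z + 2 * (g \in D0)%:Z - 2 * (g \in D2)%:Z)%R.

(* The complement identities read in the field's own finite-type structure, so
   that lia sees syntactically equal terms. *)
Let nshiftCC_F (X : {set F}) h :
  (nshift (~: X) (~: X) h + 2 * #|X| = #|F| + nshift X X h)%N := nshiftCC X h.
Let nshiftC_cross_F (X Y : {set F}) h :
  (nshift X (~: Y) h + nshift (~: Y) X h + nshift X Y h + nshift Y X h = 2 * #|X|)%N :=
  nshiftC_cross X Y h.

Local Notation blocks :=
  [:: block D0 (~: D0); block D2 D2; block E0 (~: E1); block E2 (~: E3)].

Lemma pred_sq : ((q - 1) ^ 2 + 2 * q = q ^ 2 + 1)%N.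
Proof. by case: q q_gt0 => // n _; rewrite subn1 /=; nia. Qed.

(* Differences (0, h), h <> 0: type H for the E_i and the sum identity for D0, D2. *)
Lemma blocks_lambda0 (h : F) : h != 0 ->
  (\sum_(B <- blocks) ndiff_distinct B (0%R, h))%N = (2 * q ^ 2 - 2)%N.
Proof.
move=> h0; rewrite !big_cons big_nil !block_diff0 //.
have := typeH_nshift E_typeH h0; have := D_sum h0; have := cardD0.
have := nshiftCC_F D0 h; have := nshiftCC_F E1 h; have := nshiftCC_F E3 h.
rewrite cardE0 cardE1 cardE2 cardE3 !cardF.
by have := twice_half_pronic q; move: k (q ^ 2)%N => k n; lia.
Qed.

(* Differences (1, h): the cross identity for the E_i and the balance for D0, D2. *)
Lemma blocks_lambda1 (h : F) :
  (\sum_(B <- blocks) ndiff_distinct B (1%R, h))%N = (2 * q ^ 2 - 2)%N.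
Proof.
rewrite !big_cons big_nil !block_diff1.
have := nat_of_int_balance (E_cross h); rewrite !ndiff_nshift.
have := D_balance h; have := cardD0; have := nshiftC_cross_F D0 D0 h.
have := nshiftC_cross_F E0 E1 h; have := nshiftC_cross_F E2 E3 h.
rewrite cardE0 cardE2 !cardF; have := pred_sq; have := twice_half_pronic q.
by move: k ((q - 1) ^ 2)%N (q ^ 2)%N => k s n; lia.
Qed.

Lemma blocks_diff_family :
  diff_family_params blocks (2 * q ^ 2)%N [:: (q ^ 2)%N; (q ^ 2 - 1)%N; (q ^ 2)%N; (q ^ 2)%N]
    (2 * q ^ 2 - 2)%N.
Proof.
split=> [|| [a h] ah0]; first by rewrite card_Z2F cardF.
  have := cardD0; rewrite /= !card_block cardsC (cardsCs (~: E1)) (cardsCs (~: E3)) !setCK.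
  rewrite cardD2 cardE0 cardE1 cardE2 cardE3 !cardF => cD0.
  have := twice_half_pronic q; move: k => k hk.
  by congr [:: _; _; _; _]; lia.
move: ah0; have [->|->] := Z2_cases a => ah0; last exact: blocks_lambda1.
by apply: blocks_lambda0; apply: contraNneq ah0 => ->.
Qed.

End Assembly.

Unset Implicit Arguments.

Theorem proposition2p3 (F : finFieldType) (q : nat)
  (hq_pp : exists p k : nat, [/\ prime p, (0 < k)%N & q = (p ^ k)%N])
  (hq4 : (q %% 4 = 3)%N) (hF : #|F| = (q ^ 2)%N)
  (w : F) (hw : (#|F|.-1).-primitive_root w)
  (E0 E1 E2 E3 : {set F})
  (hE0 : #|E0| = ((q ^ 2 - q) %/ 2)%N) (hE1 : #|E1| = ((q ^ 2 - q) %/ 2)%N)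
  (hE2 : #|E2| = ((q ^ 2 - q) %/ 2)%N) (hE3 : #|E3| = ((q ^ 2 - q) %/ 2)%N)
  (hH : diff_family_type_H [:: E0; E1; E2; E3])
  (hgr : forall g : F,
     ((ndiff E0 E1 g + ndiff E1 E0 g + ndiff E2 E3 g + ndiff E3 E2 g)%N%:Z
      = ((q - 1) ^ 2)%N%:Z + 2 * (g \in Dcl w 0)%:Z - 2 * (g \in Dcl w 2)%:Z)%R) :
  let D0 := Dcl w 0 in
  let D2 := Dcl w 2 in
  let B0 := [set x : Z2F F | if x.1 == 0 then x.2 \in D0 else x.2 \notin D0] in
  let B1 := [set x : Z2F F | x.2 \in D2] in
  let B2 := [set x : Z2F F | if x.1 == 0 then x.2 \in E0 else x.2 \notin E1] in
  let B3 := [set x : Z2F F | if x.1 == 0 then x.2 \in E2 else x.2 \notin E3] in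
  diff_family_params [:: B0; B1; B2; B3] (2 * q ^ 2)%N
    [:: (q ^ 2)%N; (q ^ 2 - 1)%N; (q ^ 2)%N; (q ^ 2)%N] (2 * q ^ 2 - 2)%N.
Proof.
move=> D0 D2 B0 B1 B2 B3.
have [r q_eq] : exists r, q = (4 * r + 3)%N.
  by exists (q %/ 4)%N; rewrite {1}(divn_eq q 4) hq4 mulnC.
have frobD := frob_additive hq_pp hF.
have -> : B0 = block D0 (~: D0) by apply/setP => x; rewrite !inE.
have -> : B1 = block D2 D2 by apply/setP => x; rewrite !inE if_same.
have -> : B2 = block E0 (~: E1) by apply/setP => x; rewrite !inE.
have -> : B3 = block E2 (~: E3) by apply/setP => x; rewrite !inE.
apply: blocks_diff_family hE0 hE1 hE2 hE3 hH hgr.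
- by rewrite q_eq addn3.
- exact: hF.
- exact: card_D0 q_eq hF hw.
- exact: card_D2 q_eq hF hw.
- exact: nshift_D_balance q_eq hF hw frobD.
- exact: nshift_D_sum q_eq hF hw frobD.
Qed.
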